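(* Let $q^N$ be probability distributions on $\mathbb{Z}$ satisfying assumptions (1)–(5) below, let $\phi^N(\theta)=\sum_z q^N(z)e^{iz\theta}$ be the characteristic function of $q^N$, and let $L=N^{1/2}$. There are constants $a,b>0$ such that for all $N$ and $|\theta|\le\pi$, $$|\phi^N(\theta)|\le\begin{cases}1-bN\theta^2,&|\theta|\le 4/(2L+1),\\ 1-a,&4/(2L+1)<|\theta|\le\pi.\end{cases}$$ Consequently, for any $\varepsilon\in(0,\pi]$ there is $c>0$ independent of $N$ such that $|\phi^N(\theta)|\le e^{-c}$ whenever $\varepsilon/\sqrt N<|\theta|\le\pi$.
   Context: Assumptions: (1) $q^N(z)=q^N(-z)$; (2) $\sum_z z^2q^N(z)=\sigma_N^2N$ with $\sigma_N\to\sigma\in(0,\infty)$; (3) there is $h>0$ independent of $N$ with $q^N(z)\ge h/\sqrt N$ for $|z|\le N^{1/2}$; (4) $q^N(z)\le C\exp(-c|z|/\sqrt N)$ with $c,C>0$ independent of $N$; (5) $q^N(z)=0$ for $|z|>B\sqrt N\log N$ with $B$ independent of $N$. *)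

From Stdlib Require Import Reals ZArith Lra.
From Coquelicot Require Import Coquelicot.
Open Scope R_scope.

(* Symmetric enumeration of a sum over Z: term n = f 0 if n = 0,
   and f n + f (-n) otherwise. *)
Definition zterm (f : Z -> R) (n : nat) : R :=
  match n with
  | O => f 0%Z
  | _ => f (Z.of_nat n) + f (- Z.of_nat n)%Z
  end.

Definition zsum (f : Z -> R) : R := Series (zterm f).

Definition is_prob_Z (p : Z -> R) : Prop :=
  (forall z, 0 <= p z) /\ is_series (zterm p) 1.

Definition charfun (p : Z -> R) (theta : R) : C :=
  (zsum (fun z => p z * cos (IZR z * theta)),
   zsum (fun z => p z * sin (IZR z * theta))).

From Stdlib Require Import Reals ZArith Lra Lia Psatz.
From Coquelicot Require Import Coquelicot.
Open Scope R_scope.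

(* By symmetry the characteristic function is real, so [|phi(t)| <= 1 - e]
   amounts to [1 + phi(t) >= e] and [1 - phi(t) >= e], and
   [1 +- phi(t) = sum_z q(z) (1 +- cos (z t))] has nonnegative terms.  Keeping
   only the window [|z| <= M := floor L], on which assumption (3) gives
   [q(z) >= h / L], reduces both inequalities to the trigonometric sums
   [sum_(|z| <= M) (1 +- cos (z t)) = 2M + 1 +- D_M(t)], with [D_M] the Dirichlet
   kernel.  For [t <= 4 / (2L + 1)] the estimates [1 - cos x >= x^2 / 3] and
   [cos x >= -1/2] on [|x| <= 2] give the quadratic bound; beyond that,
   [D_M(t) = sin ((M + 1/2) t) / sin (t / 2)] is at most three quarters of
   [2M + 1] once [M >= 4], and for [L < 4] the three terms [|z| <= 1]
   suffice.  Only assumptions (1) and (3) are needed. *)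

Lemma zterm_sum_S f n : sum_f_R0 (zterm f) (S n) =
  sum_f_R0 (zterm f) n + (f (Z.of_nat (S n)) + f (- Z.of_nat (S n))%Z).
Proof. reflexivity. Qed.

Lemma zterm_sum_O f : sum_f_R0 (zterm f) 0 = f 0%Z.
Proof. reflexivity. Qed.

Lemma zterm_sum_le f g M : (forall z, (Z.abs z <= Z.of_nat M)%Z -> f z <= g z) ->
  sum_f_R0 (zterm f) M <= sum_f_R0 (zterm g) M.
Proof.
  induction M as [|M IH]; intros Hfg.
  - rewrite !zterm_sum_O; apply Hfg; simpl; lia.
  - rewrite !zterm_sum_S. apply Rplus_le_compat.
    + apply IH; intros; apply Hfg; lia.
    + apply Rplus_le_compat; apply Hfg; lia.
Qed.

Lemma zterm_sum_scal c f M :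
  sum_f_R0 (zterm (fun z => c * f z)) M = c * sum_f_R0 (zterm f) M.
Proof.
  induction M as [|M IH]; [rewrite !zterm_sum_O | rewrite !zterm_sum_S, IH]; ring.
Qed.

Lemma zterm_sum_plus f g M : sum_f_R0 (zterm (fun z => f z + g z)) M =
  sum_f_R0 (zterm f) M + sum_f_R0 (zterm g) M.
Proof.
  induction M as [|M IH]; [rewrite !zterm_sum_O | rewrite !zterm_sum_S, IH]; ring.
Qed.

Lemma zterm_sum_const c M : sum_f_R0 (zterm (fun _ => c)) M = c * (2 * INR M + 1).
Proof.
  induction M as [|M IH]; [rewrite zterm_sum_O; simpl | rewrite zterm_sum_S, IH, S_INR];
  ring.
Qed.

Lemma zterm_sum_sq M : sum_f_R0 (zterm (fun z => IZR z ^ 2)) M =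
  INR M * (INR M + 1) * (2 * INR M + 1) / 3.
Proof.
  induction M as [|M IH].
  - rewrite zterm_sum_O; simpl; field.
  - rewrite zterm_sum_S, IH, opp_IZR, <- INR_IZR_INZ, S_INR; field.
Qed.

Definition dirichlet (M : nat) (t : R) : R :=
  sum_f_R0 (zterm (fun z => cos (IZR z * t))) M.

Lemma sin_half_mul_dirichlet M t :
  sin (t / 2) * dirichlet M t = sin ((INR M + / 2) * t).
Proof.
  unfold dirichlet; induction M as [|M IH].
  - rewrite zterm_sum_O, Rmult_0_l, cos_0, Rmult_1_r. simpl INR. f_equal; field.
  - rewrite zterm_sum_S, Rmult_plus_distr_l, IH, opp_IZR, <- INR_IZR_INZ.
    rewrite Ropp_mult_distr_l_reverse, cos_neg.
    replace ((INR M + / 2) * t) with (INR (S M) * t - t / 2) by (rewrite S_INR; field).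
    replace ((INR (S M) + / 2) * t) with (INR (S M) * t + t / 2) by field.
    rewrite sin_plus, sin_minus. ring.
Qed.

Lemma dirichlet_1 t : dirichlet 1 t = 1 + 2 * cos t.
Proof.
  unfold dirichlet. rewrite zterm_sum_S, zterm_sum_O, Rmult_0_l, cos_0.
  change (IZR (Z.of_nat 1)) with 1. rewrite opp_IZR, Rmult_1_l, <- Ropp_mult_distr_l,
    Rmult_1_l, cos_neg. ring.
Qed.

Lemma zterm_nonneg f : (forall z, 0 <= f z) -> forall n, 0 <= zterm f n.
Proof. intros Hf [|n]; simpl; [apply Hf | apply Rplus_le_le_0_compat; apply Hf]. Qed.

Lemma zterm_sum_le_zsum f M : (forall z, 0 <= f z) -> ex_series (zterm f) ->
  sum_f_R0 (zterm f) M <= zsum f.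
Proof.
  intros Hf Hex. unfold zsum. rewrite (Series_incr_n _ (S M)) by (lia || auto).
  assert (Htail : Series (fun _ => 0) <= Series (fun k => zterm f (S M + k)%nat)).
  { apply Series_le; [intros; split; [lra | apply zterm_nonneg; auto]|].
    now apply (ex_series_incr_n (zterm f) (S M)). }
  rewrite (Series_ext (fun _ => 0) (fun n => 0 * zterm f n)), Series_scal_l in Htail
    by (intros; ring).
  simpl pred. lra.
Qed.

Lemma ex_series_zterm_mul p g : (forall z, 0 <= p z) -> ex_series (zterm p) ->
  (forall z, Rabs (g z) <= 2) -> ex_series (zterm (fun z => p z * g z)).
Proof.
  intros Hp Hex Hg.
  assert (Hpg : forall z, Rabs (p z * g z) <= 2 * p z).
  { intros z. rewrite Rabs_mult, (Rabs_pos_eq (p z)) by auto.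
    specialize (Hp z); specialize (Hg z); nra. }
  apply (@ex_series_le R_AbsRing R_CompleteNormedModule _ (fun n => 2 * zterm p n)).
  - intros [|n]; change norm with Rabs; simpl; [apply Hpg|].
    eapply Rle_trans; [apply Rabs_triang|].
    pose proof (Hpg (Z.pos (Pos.of_succ_nat n))). pose proof (Hpg (Z.neg (Pos.of_succ_nat n))).
    lra.
  - now apply (ex_series_scal_l 2 (zterm p)).
Qed.

Definition charfun_re (p : Z -> R) (t : R) : R :=
  zsum (fun z => p z * cos (IZR z * t)).

Lemma charfun_re_Rabs p t : charfun_re p (Rabs t) = charfun_re p t.
Proof.
  unfold charfun_re, zsum. apply Series_ext. unfold Rabs; destruct Rcase_abs; [|reflexivity].
  intros [|n]; simpl; rewrite ?Ropp_mult_distr_r_reverse, ?cos_neg; reflexivity.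
Qed.

Lemma charfun_im_symmetric p t : (forall z, p z = p (- z)%Z) ->
  zsum (fun z => p z * sin (IZR z * t)) = 0.
Proof.
  intros Hsym. unfold zsum.
  rewrite (Series_ext _ (fun n => 0 * zterm p n)), Series_scal_l; [ring|].
  intros [|n]; unfold zterm.
  - rewrite Rmult_0_l, sin_0; ring.
  - rewrite <- (Hsym (Z.of_nat (S n))), opp_IZR, Ropp_mult_distr_l_reverse, sin_neg. ring.
Qed.

Lemma Cmod_charfun_symmetric p t : (forall z, p z = p (- z)%Z) ->
  Cmod (charfun p t) = Rabs (charfun_re p (Rabs t)).
Proof.
  intros Hsym. rewrite charfun_re_Rabs. unfold charfun.
  rewrite charfun_im_symmetric by exact Hsym. apply Cmod_R.
Qed.

Lemma charfun_re_one_plus_scal p s t : (forall z, 0 <= p z) -> is_series (zterm p) 1 ->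
  1 + s * charfun_re p t = zsum (fun z => p z * (1 + s * cos (IZR z * t))).
Proof.
  intros Hp Hs. unfold charfun_re, zsum.
  assert (Hex : ex_series (zterm p)) by (exists 1; exact Hs).
  assert (Hexc : ex_series (zterm (fun z => p z * cos (IZR z * t)))).
  { apply ex_series_zterm_mul; auto.
    intros z. pose proof (COS_bound (IZR z * t)). apply Rabs_le; lra. }
  rewrite (Series_ext (zterm (fun z => p z * (1 + s * cos (IZR z * t))))
    (fun n => zterm p n + s * zterm (fun z => p z * cos (IZR z * t)) n))
    by (intros [|n]; unfold zterm; ring).
  rewrite Series_plus, Series_scal_l, (is_series_unique _ 1 Hs); auto.
  exact (ex_series_scal_l s _ Hexc).
Qed.

Lemma sin_ge_cubic y : 0 <= y <= PI -> y - y ^ 3 / 6 <= sin y.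
Proof.
  intros [H0 HPI]. destruct (sin_bound y 0 H0 HPI) as [Hlb _].
  unfold sin_approx, sin_term in Hlb. simpl in Hlb. eapply Rle_trans; [|exact Hlb].
  right; field.
Qed.

Lemma cos_ge_quadratic y : - PI / 2 <= y <= PI / 2 -> 1 - y ^ 2 / 2 <= cos y.
Proof.
  intros [Hl Hr]. destruct (cos_bound y 0 Hl Hr) as [Hlb _].
  unfold cos_approx, cos_term in Hlb. simpl in Hlb. eapply Rle_trans; [|exact Hlb].
  right; field.
Qed.

Lemma cos_ge_neg_half x : Rabs x <= 2 -> - 1 / 2 <= cos x.
Proof.
  intros Hx. apply Rabs_le_between in Hx. pose proof PI2_3_2.
  replace x with (2 * (x / 2)) by field. rewrite cos_2a_cos.
  pose proof (cos_ge_quadratic (x / 2) ltac:(lra)).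
  assert ((x / 2) ^ 2 <= 1) by nra. nra.
Qed.

Lemma one_minus_cos_ge x : Rabs x <= 2 -> x ^ 2 / 3 <= 1 - cos x.
Proof.
  intros Hx. pose proof PI2_3_2.
  assert (Hcos : 1 - cos x = 2 * sin (Rabs (x / 2)) ^ 2).
  { replace x with (2 * (x / 2)) at 1 by field. rewrite cos_2a_sin.
    unfold Rabs; destruct Rcase_abs; [rewrite sin_neg|]; ring. }
  assert (Hsq : x ^ 2 = 4 * Rabs (x / 2) ^ 2) by (rewrite pow2_abs; field).
  assert (Ha : 0 <= Rabs (x / 2) <= 1).
  { split; [apply Rabs_pos|]. unfold Rdiv.
    rewrite Rabs_mult, Rabs_inv, (Rabs_pos_eq 2) by lra. lra. }
  pose proof (sin_ge_cubic (Rabs (x / 2)) ltac:(lra)).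
  assert (5 * Rabs (x / 2) / 6 <= sin (Rabs (x / 2))) by nra.
  rewrite Hcos, Hsq. nra.
Qed.

Lemma Rabs_IZR_le_INR z M : (Z.abs z <= Z.of_nat M)%Z -> Rabs (IZR z) <= INR M.
Proof. intros Hz. rewrite <- abs_IZR, INR_IZR_INZ. now apply IZR_le. Qed.

Lemma exists_nat_floor L : 1 <= L -> exists M : nat, (1 <= M)%nat /\ INR M <= L < INR M + 1.
Proof.
  intros HL. destruct (archimed L) as [Hup1 Hup2].
  assert (Hup : (1 < up L)%Z) by (apply lt_IZR; lra).
  exists (Z.to_nat (up L - 1)).
  rewrite INR_IZR_INZ, Z2Nat.id, minus_IZR by lia. split; [lia|]. simpl IZR. lra.
Qed.

Lemma Rabs_mul_le_window z M u : (Z.abs z <= Z.of_nat M)%Z -> 0 <= u -> INR M * u <= 2 ->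
  Rabs (IZR z * u) <= 2.
Proof.
  intros Hz Hu HMu. pose proof (Rabs_IZR_le_INR z M Hz).
  rewrite Rabs_mult, (Rabs_pos_eq u) by lra. nra.
Qed.

Lemma dirichlet_ge_small M u : 0 <= u -> INR M * u <= 2 ->
  - (2 * INR M + 1) / 2 <= dirichlet M u.
Proof.
  intros Hu HMu.
  replace (- (2 * INR M + 1) / 2) with (sum_f_R0 (zterm (fun _ => - 1 / 2)) M)
    by (rewrite zterm_sum_const; field).
  apply zterm_sum_le. intros z Hz.
  exact (cos_ge_neg_half _ (Rabs_mul_le_window z M u Hz Hu HMu)).
Qed.

Lemma dirichlet_le_small M u : 0 <= u -> INR M * u <= 2 ->
  dirichlet M u <= 2 * INR M + 1 - u ^ 2 / 9 * (INR M * (INR M + 1) * (2 * INR M + 1)).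
Proof.
  intros Hu HMu.
  assert (Hsum : sum_f_R0 (zterm (fun z => u ^ 2 / 3 * IZR z ^ 2)) M <=
                 sum_f_R0 (zterm (fun z => 1 + - 1 * cos (IZR z * u))) M).
  { apply zterm_sum_le. intros z Hz.
    pose proof (one_minus_cos_ge _ (Rabs_mul_le_window z M u Hz Hu HMu)).
    replace (u ^ 2 / 3 * IZR z ^ 2) with ((IZR z * u) ^ 2 / 3) by field. lra. }
  rewrite zterm_sum_scal, zterm_sum_sq, zterm_sum_plus, zterm_sum_const, zterm_sum_scal
    in Hsum.
  fold (dirichlet M u) in Hsum. lra.
Qed.

Lemma Rabs_dirichlet_le M u : 4 <= INR M -> 0 < u <= PI -> 4 < u * (2 * INR M + 3) ->
  Rabs (dirichlet M u) <= 3 * (2 * INR M + 1) / 4.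
Proof.
  intros HM Hu Hwide. pose proof PI2_3_2. pose proof PI_4.
  pose proof (Rabs_pos (dirichlet M u)).
  assert (Hsin : 0 < sin (u / 2)) by (apply sin_gt_0; lra).
  assert (Hkernel : Rabs (dirichlet M u) * sin (u / 2) <= 1).
  { rewrite <- (Rabs_pos_eq (sin (u / 2))), <- Rabs_mult, Rmult_comm by lra.
    rewrite sin_half_mul_dirichlet. apply Rabs_le, SIN_bound. }
  pose proof (sin_ge_cubic (u / 2) ltac:(lra)).
  destruct (Rle_or_lt u 1) as [Hu1 | Hu1].
  - assert (Hlb : 23 * u / 48 <= sin (u / 2)) by nra.
    assert (Rabs (dirichlet M u) * u <= 48 / 23) by nra.
    assert (Rabs (dirichlet M u) * u * (2 * INR M + 3) <= 48 / 23 * (2 * INR M + 3))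
      by (apply Rmult_le_compat_r; lra).
    nra.
  - assert (Hlb : u / 6 <= sin (u / 2)) by nra. nra.
Qed.

Section Window.

Variables (p : Z -> R) (L h : R).
Hypotheses (Hp : forall z, 0 <= p z) (Hs : is_series (zterm p) 1)
  (HL : 1 < L) (Hh : 0 < h)
  (Hlow : forall z, Rabs (IZR z) <= L -> h / L <= p z).

Lemma charfun_re_window s M u : Rabs s <= 1 -> INR M <= L ->
  h / L * (2 * INR M + 1 + s * dirichlet M u) <= 1 + s * charfun_re p u.
Proof.
  intros Hs1 HML. apply Rabs_le_between in Hs1.
  assert (Hb : forall z, 0 <= 1 + s * cos (IZR z * u) <= 2).
  { intros z. pose proof (COS_bound (IZR z * u)).
    split; nra. }
  rewrite charfun_re_one_plus_scal by auto.
  replace (h / L * (2 * INR M + 1 + s * dirichlet M u))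
    with (sum_f_R0 (zterm (fun z => h / L * (1 + s * cos (IZR z * u)))) M)
    by (unfold dirichlet; rewrite zterm_sum_scal, zterm_sum_plus, zterm_sum_const, zterm_sum_scal;
        ring).
  eapply Rle_trans; [apply zterm_sum_le | apply zterm_sum_le_zsum].
  - intros z Hz. apply Rmult_le_compat_r; [apply Hb|].
    apply Hlow. pose proof (Rabs_IZR_le_INR z M Hz). lra.
  - intros z. apply Rmult_le_pos; [apply Hp | apply Hb].
  - apply ex_series_zterm_mul; [exact Hp | exists 1; exact Hs |].
    intros z. specialize (Hb z). apply Rabs_le; lra.
Qed.

Lemma Rabs_charfun_re_small u : 0 <= u -> u <= 4 / (2 * L + 1) ->
  Rabs (charfun_re p u) <= 1 - h / 36 * (L * L) * u ^ 2.
Proof.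
  intros Hu Hu4.
  destruct (exists_nat_floor L) as (M & HM1 & HML & HLM); [lra|].
  assert (Hm1 : 1 <= INR M) by (apply (le_INR 1); lia).
  assert (HLu : L * u <= 2).
  { apply (Rmult_le_compat_r (2 * L + 1)) in Hu4; [|lra].
    unfold Rdiv in Hu4. rewrite Rmult_assoc, Rinv_l in Hu4; nra. }
  assert (HMu : INR M * u <= 2) by nra.
  assert (HhL : 0 < h / L) by (apply Rdiv_lt_0_compat; lra).
  assert (Hplus : h / 2 <= 1 + 1 * charfun_re p u).
  { eapply Rle_trans; [|apply charfun_re_window; [rewrite Rabs_R1; lra | exact HML]].
    pose proof (dirichlet_ge_small M u Hu HMu).
    replace (h / 2) with (h / L * (L / 2)) by (field; lra).
    apply Rmult_le_compat_l; lra. }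
  assert (Hminus : h * (L * L) * u ^ 2 / 18 <= 1 + - 1 * charfun_re p u).
  { eapply Rle_trans; [|apply charfun_re_window; [rewrite Rabs_m1; lra | exact HML]].
    pose proof (dirichlet_le_small M u Hu HMu).
    assert (Hcube : L * L * L / 2 <= INR M * (INR M + 1) * (2 * INR M + 1)).
    { replace (L * L * L / 2) with (L / 2 * L * L) by field.
      apply Rmult_le_compat; nra. }
    replace (h * (L * L) * u ^ 2 / 18) with (h / L * (u ^ 2 / 9 * (L * L * L / 2)))
      by (field; lra).
    apply Rmult_le_compat_l; [lra|].
    assert (0 <= u ^ 2 / 9) by nra. nra. }
  assert (HLu2 : L * L * u ^ 2 <= 4).
  { replace (L * L * u ^ 2) with ((L * u) * (L * u)) by ring.
    assert (0 <= L * u) by nra. nra. }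
  pose proof (Rmult_le_compat_l (h / 36) _ _ ltac:(lra) HLu2).
  assert (0 <= h * (L * L) * u ^ 2) by (apply Rmult_le_pos; nra).
  apply Rabs_le. lra.
Qed.

Lemma Rabs_charfun_re_large u : 4 / (2 * L + 1) < u -> u <= PI ->
  Rabs (charfun_re p u) <= 1 - h / 32.
Proof.
  intros Hu4 HuPI. pose proof PI2_3_2.
  assert (Hwide : 4 < u * (2 * L + 1)).
  { apply (Rmult_lt_compat_r (2 * L + 1)) in Hu4; [|lra].
    unfold Rdiv in Hu4. rewrite Rmult_assoc, Rinv_l in Hu4; lra. }
  assert (Hu : 0 < u) by nra.
  assert (HhL : 0 < h / L) by (apply Rdiv_lt_0_compat; lra).
  destruct (Rlt_or_le L 4) as [HL4 | HL4].
  - assert (HhL4 : h / 4 <= h / L).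
    { unfold Rdiv. apply Rmult_le_compat_l; [lra|]. apply Rinv_le_contravar; lra. }
    assert (Hcos : 16 / 243 <= 1 - cos u).
    { assert (cos u <= cos (4 / 9)).
      { destruct (Req_dec u (4 / 9)) as [-> | Hne]; [lra|].
        left; apply cos_decreasing_1; nra. }
      pose proof (one_minus_cos_ge (4 / 9) ltac:(rewrite Rabs_pos_eq; lra)). lra. }
    pose proof (charfun_re_window 1 1 u ltac:(rewrite Rabs_R1; lra) ltac:(simpl; lra)).
    pose proof (charfun_re_window (- 1) 1 u ltac:(rewrite Rabs_m1; lra) ltac:(simpl; lra)).
    rewrite dirichlet_1 in *. simpl INR in *. pose proof (COS_bound u).
    apply Rabs_le. nra.
  - destruct (exists_nat_floor L) as (M & _ & HML & HLM); [lra|].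
    assert (HM4 : 4 <= INR M).
    { assert (HM3 : (3 < M)%nat) by (apply INR_lt; simpl; lra).
      apply le_INR in HM3. simpl in HM3. lra. }
    pose proof (Rabs_dirichlet_le M u HM4 ltac:(lra) ltac:(nra)) as HD.
    apply Rabs_le_between in HD.
    assert (Hwindow : forall s, (s = 1 \/ s = - 1) -> h / 4 <= 1 + s * charfun_re p u).
    { intros s Hs1.
      eapply Rle_trans; [|apply charfun_re_window;
                          [destruct Hs1 as [-> | ->]; rewrite ?Rabs_R1, ?Rabs_m1; lra | exact HML]].
      replace (h / 4) with (h / L * (L / 4)) by (field; lra).
      apply Rmult_le_compat_l; [lra|]. destruct Hs1 as [-> | ->]; lra. }
    pose proof (Hwindow 1 (or_introl eq_refl)). pose proof (Hwindow (- 1) (or_intror eq_refl)).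
    apply Rabs_le. lra.
Qed.

Lemma Cmod_charfun_le (Hsym : forall z, p z = p (- z)%Z) theta : Rabs theta <= PI ->
  (Rabs theta <= 4 / (2 * L + 1) ->
     Cmod (charfun p theta) <= 1 - h / 36 * (L * L) * theta ^ 2) /\
  (4 / (2 * L + 1) < Rabs theta -> Cmod (charfun p theta) <= 1 - h / 32).
Proof.
  intros HPI. rewrite Cmod_charfun_symmetric by exact Hsym. split; intros Htheta.
  - rewrite <- pow2_abs. apply Rabs_charfun_re_small; [apply Rabs_pos | exact Htheta].
  - now apply Rabs_charfun_re_large.
Qed.

End Window.

Theorem lemma6 (q : nat -> Z -> R) (N0 : nat) (HN0 : (2 <= N0)%nat)
  (sigma : nat -> R) (h B C0 c0 : R)
  (Hprob : forall N, (N0 <= N)%nat -> is_prob_Z (q N))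
  (H1 : forall N, (N0 <= N)%nat -> forall z, q N z = q N (- z)%Z)
  (H2 : forall N, (N0 <= N)%nat ->
        zsum (fun z => (IZR z) ^ 2 * q N z) = (sigma N) ^ 2 * INR N)
  (H2lim : exists s, 0 < s /\ is_lim_seq sigma s)
  (Hh : 0 < h)
  (H3 : forall N, (N0 <= N)%nat -> forall z,
        Rabs (IZR z) <= sqrt (INR N) -> h / sqrt (INR N) <= q N z)
  (HC0 : 0 < C0) (Hc0 : 0 < c0)
  (H4 : forall N, (N0 <= N)%nat -> forall z,
        q N z <= C0 * exp (- c0 * Rabs (IZR z) / sqrt (INR N)))
  (H5 : forall N, (N0 <= N)%nat -> forall z,
        Rabs (IZR z) > B * sqrt (INR N) * ln (INR N) -> q N z = 0) :
  (exists a b : R, 0 < a /\ 0 < b /\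
     forall N, (N0 <= N)%nat -> forall theta, Rabs theta <= PI ->
       (Rabs theta <= 4 / (2 * sqrt (INR N) + 1) ->
          Cmod (charfun (q N) theta) <= 1 - b * INR N * theta ^ 2) /\
       (4 / (2 * sqrt (INR N) + 1) < Rabs theta ->
          Cmod (charfun (q N) theta) <= 1 - a))
  /\
  (forall eps, 0 < eps <= PI -> exists c, 0 < c /\
     forall N, (N0 <= N)%nat -> forall theta,
       eps / sqrt (INR N) < Rabs theta <= PI ->
       Cmod (charfun (q N) theta) <= exp (- c)).
Proof.
  assert (HsqrtN : forall N, (N0 <= N)%nat ->
            1 < sqrt (INR N) /\ sqrt (INR N) * sqrt (INR N) = INR N).
  { intros N HN. apply le_INR in HN. apply le_INR in HN0. simpl in HN0.
    rewrite <- sqrt_1, sqrt_sqrt by lra. split; [apply sqrt_lt_1_alt|]; lra. }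
  assert (Hbound : forall N, (N0 <= N)%nat -> forall theta, Rabs theta <= PI ->
       (Rabs theta <= 4 / (2 * sqrt (INR N) + 1) ->
          Cmod (charfun (q N) theta) <= 1 - h / 36 * INR N * theta ^ 2) /\
       (4 / (2 * sqrt (INR N) + 1) < Rabs theta ->
          Cmod (charfun (q N) theta) <= 1 - h / 32)).
  { intros N HN theta. destruct (Hprob N HN) as [Hp Hs]. destruct (HsqrtN N HN) as [HL HL2].
    pose proof (Cmod_charfun_le (q N) _ h Hp Hs HL Hh (H3 N HN) (H1 N HN) theta) as Hc.
    now rewrite HL2 in Hc. }
  split; [exists (h / 32), (h / 36); split; [lra | split; [lra | exact Hbound]] |].
  intros eps Heps. exists (Rmin (h / 32) (h / 36 * eps ^ 2)).
  assert (Heps2 : 0 < h / 36 * eps ^ 2) by (apply Rmult_lt_0_compat; [lra | apply pow_lt; lra]).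
  split; [apply Rmin_glb_lt; lra|].
  intros N HN theta [Hlo HPI].
  eapply Rle_trans; [|apply exp_ineq1_le].
  destruct (HsqrtN N HN) as [HL HL2].
  destruct (Rle_or_lt (Rabs theta) (4 / (2 * sqrt (INR N) + 1))) as [Hsmall | Hlarge].
  - assert (HNtheta : eps ^ 2 <= INR N * theta ^ 2).
    { apply (Rmult_lt_compat_r (sqrt (INR N))) in Hlo; [|lra].
      unfold Rdiv in Hlo. rewrite Rmult_assoc, Rinv_l, Rmult_1_r in Hlo by lra.
      rewrite <- HL2, <- (pow2_abs theta). nra. }
    pose proof (Rmult_le_compat_l (h / 36) _ _ ltac:(lra) HNtheta).
    pose proof (Rmin_r (h / 32) (h / 36 * eps ^ 2)).
    pose proof (proj1 (Hbound N HN theta HPI) Hsmall). lra.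
  - pose proof (Rmin_l (h / 32) (h / 36 * eps ^ 2)).
    pose proof (proj2 (Hbound N HN theta HPI) Hlarge). lra.
Qed.
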